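(* Let $H=([n],E)$ be a hypergraph without loops. For $1\le a\le\#E$ and $b\in\mathbb{N}$ let $s(a,b)$ be the number of $a$-element subsets $S\subseteq E$ such that the hypergraph $([n],S)$ has exactly $b$ connected components (isolated vertices counting as components); set $s(0,n)=1$ and $s(0,b)=0$ for $b\ne n$. Write $T(b,i)=\sum_{c=0}^i(-1)^c\binom{i}{c}(i-c+2)^b$. Then for all $0\le i\le n$ and every $0\le m\le\#E$: \[f_i(\chi_H(k+1))=\sum_{a=0}^{\#E}(-1)^a\sum_{b=0}^n s(a,b)\,T(b,i),\] \[f_i(\chi_H(k+1))\le\sum_{a=0}^{m}(-1)^a\sum_{b=0}^n s(a,b)\,T(b,i)\quad\text{if $m$ is even},\] \[f_i(\chi_H(k+1))\ge\sum_{a=0}^{m}(-1)^a\sum_{b=0}^n s(a,b)\,T(b,i)\quad\text{if $m$ is odd}.\] Moreover, if $l=\min\{\#F: F\in E\}$ and $n-l+2\le i\le n$, then $f_i(\chi_H(k+1))=\sum_{j=0}^i(-1)^j\binom{i}{j}(i-j+2)^n$.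
   Context: A hypergraph $H=([n],E)$ has edges that are nonempty subsets of $[n]$; ''without loops'' means no edge has cardinality 1; also no edge is properly contained in another. A proper $k$-coloring is a map $[n]\to[k]$ with no monochromatic edge; $\chi_H(k)$ is the number of proper $k$-colorings. For a polynomial $p(k)$ of degree at most $n$, its $f$-vector is defined by $p(k)=\sum_{i=0}^n f_i(p)\binom{k-1}{i}$, $f_{-1}=1$; here $f_i(\chi_H(k+1))$ refers to the polynomial $k\mapsto\chi_H(k+1)$. *)

From HB Require Import structures.
From mathcomp Require Import all_boot all_order all_algebra.
Set Implicit Arguments. Unset Strict Implicit. Unset Printing Implicit Defensive.
Import GRing.Theory Num.Theory.

Definition hypergraph_no_loops (n : nat) (E : {set {set 'I_n}}) : Prop :=
  [/\ (forall F, F \in E -> F != set0),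
      (forall F, F \in E -> #|F| != 1%N)   &      (* no loops *)
      (forall F G, F \in E -> G \in E -> ~~ (F \proper G))].

Definition monochromatic (n k : nat) (c : {ffun 'I_n -> 'I_k}) (F : {set 'I_n}) : bool :=
  [exists j : 'I_k, [forall x in F, c x == j]].

Definition proper_coloring (n k : nat) (E : {set {set 'I_n}}) (c : {ffun 'I_n -> 'I_k}) : bool :=
  [forall F in E, ~~ monochromatic c F].

Definition chi (n : nat) (E : {set {set 'I_n}}) (k : nat) : nat :=
  #|[set c : {ffun 'I_n -> 'I_k} | proper_coloring E c]|.

(* f is the f-vector of the polynomial k |-> chi_H(k+1):
   chi_H(k+1) = sum_{i=0}^n f_i * binom(k-1, i)  (as polynomials in k,
   equivalently at all integers k >= 1). *)
Definition is_fvector_chi_shift (n : nat) (E : {set {set 'I_n}}) (f : nat -> int) : Prop :=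
  forall k : nat, (1 <= k)%N ->
    ((chi E k.+1)%:Z = \sum_(i < n.+1) f i * ('C(k.-1, i))%:Z)%R.

Definition hadj (n : nat) (S : {set {set 'I_n}}) : rel 'I_n :=
  fun x y => [exists F in S, (x \in F) && (y \in F)].

Definition ncomp (n : nat) (S : {set {set 'I_n}}) : nat :=
  n_comp (hadj S) 'I_n.

Definition s_count (n : nat) (E : {set {set 'I_n}}) (a b : nat) : nat :=
  if a == 0%N then (b == n : nat)
  else #|[set S in powerset E | (#|S| == a) && (ncomp S == b)]|.

Definition T_coef (b i : nat) : int :=
  (\sum_(c < i.+1) (-1) ^+ c * ('C(i, c))%:Z * ((i - c + 2)%N)%:Z ^+ b)%R.

Definition partial_sum (n : nat) (E : {set {set 'I_n}}) (m i : nat) : int :=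
  (\sum_(a < m.+1) (-1) ^+ a * \sum_(b < n.+1) (s_count E a b)%:Z * T_coef b i)%R.

From HB Require Import structures.
From mathcomp Require Import all_boot all_order all_algebra.
From mathcomp Require Import ring zify.
Set Implicit Arguments. Unset Strict Implicit. Unset Printing Implicit Defensive.
Import Order.TTheory GRing.Theory Num.Theory.
Local Open Scope ring_scope.

(* The key observation is that f_i(chi_H(k+1)) counts the proper colorings of
   H with the colors 0, ..., i+1 that use each of the "top" colors 2, ..., i+1
   (proper top colorings). *)

Lemma alternating_binomial_prefix (N m : nat) :
  \sum_(a < m.+1) (-1) ^+ a * ('C(N, a))%:Z =
  if N == 0%N then 1 else (-1) ^+ m * ('C(N.-1, m))%:Z.
Proof.
elim: m => [|m IHm]; first by rewrite big_ord1 /= !bin0; case: N.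
rewrite big_ord_recr /= IHm; case: N {IHm} => [|N] /=.
  by rewrite bin0n mulr0 addr0.
rewrite binS PoszD exprS; ring.
Qed.

Lemma card_set_indicator (T : finType) (U : {set T}) (Q : pred T) :
  (#|[set x in U | Q x]|)%:Z = \sum_(x in U) (Q x : nat)%:Z.
Proof.
rewrite -sum1_card -natz natr_sum big_mkcond [RHS]big_mkcond /=.
by apply: eq_bigr => x _; rewrite inE; case: (x \in U); case: (Q x).
Qed.

Lemma sum_small_subsets (I : finType) (D : {set I}) (m : nat) (G : {set I} -> int) :
  \sum_(S in powerset D | (#|S| <= m)%N) G S =
  \sum_(a < m.+1) \sum_(S in powerset D | #|S| == a) G S.
Proof.
rewrite (partition_big (fun S : {set I} => (inord #|S| : 'I_m.+1)) xpredT) //=.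
apply: eq_bigr => a _; apply: eq_bigl => S.
case: (S \in powerset D) => //=; case: (leqP #|S| m) => Sm /=.
  by rewrite -val_eqE /= inordK.
by apply/esym/negbTE/eqP => Sa; move: (ltn_ord a); rewrite -Sa ltnNge Sm.
Qed.

Lemma sum_small_subsets_by_size (I : finType) (D : {set I}) (m : nat) (F : nat -> int) :
  \sum_(S in powerset D | (#|S| <= m)%N) F #|S| =
  \sum_(a < m.+1) ('C(#|D|, a))%:Z * F a.
Proof.
rewrite sum_small_subsets; apply: eq_bigr => a _.
rewrite (eq_bigr (fun _ => F a)); last by move=> S /andP[_ /eqP ->].
rewrite (eq_bigl [in [set S in powerset D | #|S| == a]]); last by move=> S; rewrite inE.
rewrite sumr_const -cards_draws -mulr_natl natz; congr (Posz _ * _).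
by apply: eq_card => S; rewrite !inE.
Qed.

Section Bonferroni.
Variables (T I : finType) (U : {set T}) (D : {set I}) (A : I -> T -> bool).

Definition meet_count (S : {set I}) : nat := #|[set x in U | [forall j in S, A j x]]|.

Definition avoid_count : nat := #|[set x in U | [forall j in D, ~~ A j x]]|.

Definition bonferroni_sum (m : nat) : int :=
  \sum_(S in powerset D | (#|S| <= m)%N) (-1) ^+ #|S| * (meet_count S)%:Z.

Definition events_at (x : T) : {set I} := [set j in D | A j x].

(* The error of the truncation, computed pointwise: a point x contributes the
   truncated alternating sum of the row #|events_at x| of Pascal's triangle. *)
Lemma bonferroni_error (m : nat) :
  bonferroni_sum m - (avoid_count)%:Z =
  \sum_(x in U) (if #|events_at x| == 0%N then 0
                 else (-1) ^+ m * ('C(#|events_at x|.-1, m))%:Z).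
Proof.
rewrite /bonferroni_sum (eq_bigr (fun S : {set I} => \sum_(x in U)
    (-1) ^+ #|S| * ([forall j in S, A j x] : nat)%:Z)); last first.
  by move=> S _; rewrite card_set_indicator mulr_sumr.
rewrite exchange_big /= /avoid_count card_set_indicator -sumrB.
apply: eq_bigr => x _.
have sub_events (S : {set I}) : (S \subset events_at x) = (S \subset D) && [forall j in S, A j x].
  apply/subsetP/andP => [SJ|[/subsetP SD /forall_inP SA] j Sj].
    by split; [apply/subsetP|apply/forall_inP] => j /SJ; rewrite inE => /andP[].
  by rewrite inE SD ?SA.
have avoid_all : [forall j in D, ~~ A j x] = (#|events_at x| == 0%N).
  rewrite cards_eq0; apply/forall_inP/eqP => [nA|J0 j Dj].
    by apply/setP => j; rewrite !inE; case Dj: (j \in D); rewrite // (negbTE (nA j Dj)).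
  by apply/negP => Aj; have := in_set0 j; rewrite -J0 inE Dj Aj.
have restrict : \sum_(S in powerset D | (#|S| <= m)%N)
      (-1) ^+ #|S| * ([forall j in S, A j x] : nat)%:Z =
    \sum_(S in powerset (events_at x) | (#|S| <= m)%N) (-1) ^+ #|S|.
  rewrite big_mkcond [RHS]big_mkcond; apply: eq_bigr => S _.
  rewrite !powersetE sub_events.
  by case: (S \subset D); case: [forall j in S, A j x]; case: (_ <= _)%N;
    rewrite /= ?mulr1 ?mulr0.
rewrite avoid_all restrict sum_small_subsets_by_size.
under eq_bigr do rewrite mulrC.
by rewrite alternating_binomial_prefix; case: eqP; rewrite ?subrr ?subr0.
Qed.

Lemma bonferroni_exact (m : nat) : (#|D| <= m)%N -> bonferroni_sum m = avoid_count.
Proof.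
move=> Dm; apply/eqP; rewrite -subr_eq0 bonferroni_error; apply/eqP.
apply: big1 => x _; case: eqP => // events_nonempty; rewrite bin_small ?mulr0 //.
have /subset_leq_card : events_at x \subset D by apply/subsetP => j; rewrite inE => /andP[].
lia.
Qed.

Lemma bonferroni_upper (m : nat) : ~~ odd m -> (avoid_count)%:Z <= bonferroni_sum m.
Proof.
move=> m_even; rewrite -subr_ge0 bonferroni_error; apply: sumr_ge0 => x _.
by case: ifP => // _; rewrite -signr_odd (negbTE m_even) expr0 mul1r.
Qed.

Lemma bonferroni_lower (m : nat) : odd m -> bonferroni_sum m <= (avoid_count)%:Z.
Proof.
move=> m_odd; rewrite -subr_le0 bonferroni_error; apply: sumr_le0 => x _.
by case: ifP => // _; rewrite -signr_odd m_odd expr1 mulN1r oppr_le0.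
Qed.

End Bonferroni.

Definition colors_used (b y : nat) (d : {ffun 'I_b -> 'I_y}) : {set 'I_y} :=
  [set d x | x : 'I_b].

Definition count_colorings (b y : nat) (Q : pred {set 'I_y}) : nat :=
  #|[set d : {ffun 'I_b -> 'I_y} | Q (colors_used d)]|.
Arguments count_colorings : clear implicits.

Definition edges_mono (n y : nat) (S : {set {set 'I_n}}) (c : {ffun 'I_n -> 'I_y}) : bool :=
  [forall F in S, monochromatic c F].

Lemma monochromaticP (n y : nat) (c : {ffun 'I_n -> 'I_y}) (F : {set 'I_n}) :
  (0 < y)%N ->
  reflect {in F &, forall u v, c u = c v} (monochromatic c F).
Proof.
move=> y_gt0; apply: (iffP existsP) => [[j /forall_inP cF] u v Fu Fv|c_const].
  by rewrite (eqP (cF u Fu)) (eqP (cF v Fv)).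
case: (pickP [in F]) => [x0 Fx0|F0].
  by exists (c x0); apply/forall_inP => v Fv; rewrite (c_const v x0).
by exists (Ordinal y_gt0); apply/forall_inP => v; rewrite F0.
Qed.

(* Colorings monochromatic on the edges of S are exactly the colorings of the
   connected components of ([n], S): we transport colorings along the
   enumeration of the component representatives (roots). *)
Section ComponentColorings.
Variables (n y : nat) (S : {set {set 'I_n}}).
Hypothesis y_gt0 : (0 < y)%N.

Local Notation adj := (hadj S).

Lemma hadj_sym : symmetric adj.
Proof.
by move=> x z; apply/existsP/existsP => -[F /andP[SF /andP[Fx Fz]]];
  exists F; rewrite SF Fx Fz.
Qed.

Let adj_connect_sym : connect_sym adj := sym_connect_sym hadj_sym.

Definition comp_roots : {set 'I_n} := [set x | roots adj x].

Lemma ncomp_roots : ncomp S = #|comp_roots|.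
Proof. by rewrite /ncomp /n_comp_mem; apply: eq_card => x; rewrite !inE andbT. Qed.

Lemma root_in_comp_roots (x : 'I_n) : fingraph.root adj x \in comp_roots.
Proof. by rewrite inE roots_root. Qed.

Definition comp_index (x : 'I_n) : 'I_#|comp_roots| :=
  enum_rank_in (root_in_comp_roots x) (fingraph.root adj x).

Lemma comp_indexK (x : 'I_n) : enum_val (comp_index x) = fingraph.root adj x.
Proof. by rewrite /comp_index enum_rankK_in ?root_in_comp_roots. Qed.

Lemma comp_index_val (j : 'I_#|comp_roots|) : comp_index (enum_val j) = j.
Proof.
apply: enum_val_inj; rewrite comp_indexK.
by have := enum_valP j; rewrite inE => /eqP.
Qed.

Lemma edges_mono_connect (c : {ffun 'I_n -> 'I_y}) (x z : 'I_n) :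
  edges_mono S c -> connect adj x z -> c x = c z.
Proof.
move=> /forall_inP c_mono /connectP[p adj_p ->] {z}.
elim: p x adj_p => [|z p IHp] x //= /andP[/existsP[F /andP[SF /andP[Fx Fz]]] adj_p].
by rewrite -(IHp z adj_p); apply: (monochromaticP _ _ y_gt0 (c_mono F SF)).
Qed.

Definition pullback (d : {ffun 'I_#|comp_roots| -> 'I_y}) : {ffun 'I_n -> 'I_y} :=
  [ffun x => d (comp_index x)].

Lemma pullback_inj : injective pullback.
Proof.
move=> d1 d2 eq_d; apply/ffunP => j.
have := congr1 (fun c : {ffun 'I_n -> 'I_y} => c (enum_val j)) eq_d.
by rewrite !ffunE comp_index_val.
Qed.

Lemma colors_used_pullback (d : {ffun 'I_#|comp_roots| -> 'I_y}) :
  colors_used (pullback d) = colors_used d.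
Proof.
apply/setP => v; apply/imsetP/imsetP => -[x _ ->]; rewrite ?ffunE.
  by exists (comp_index x).
by exists (enum_val x); rewrite // ffunE comp_index_val.
Qed.

Lemma edges_mono_pullback (d : {ffun 'I_#|comp_roots| -> 'I_y}) :
  edges_mono S (pullback d).
Proof.
apply/forall_inP => F SF; apply/(monochromaticP _ _ y_gt0) => u v Fu Fv.
rewrite !ffunE; congr (d _); apply: enum_val_inj; rewrite !comp_indexK.
by apply/(fingraph.rootP adj_connect_sym)/connect1/existsP; exists F; rewrite SF Fu Fv.
Qed.

Lemma edges_mono_pullbackP (c : {ffun 'I_n -> 'I_y}) :
  edges_mono S c -> c = pullback [ffun j => c (enum_val j)].
Proof.
move=> c_mono; apply/ffunP => x; rewrite !ffunE comp_indexK.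
exact/(edges_mono_connect c_mono)/connect_root.
Qed.

Lemma card_edges_mono (Q : pred {set 'I_y}) :
  #|[set c : {ffun 'I_n -> 'I_y} | edges_mono S c && Q (colors_used c)]| =
  count_colorings (ncomp S) y Q.
Proof.
rewrite ncomp_roots /count_colorings -(card_imset _ pullback_inj).
apply: eq_card => c; rewrite inE; apply/andP/imsetP => [[c_mono Qc]|[d]].
  exists [ffun j => c (enum_val j)]; last exact: edges_mono_pullbackP.
  by rewrite inE -colors_used_pullback -edges_mono_pullbackP.
by rewrite inE => Qd ->; rewrite edges_mono_pullback colors_used_pullback.
Qed.

End ComponentColorings.

Lemma ncomp_set0 (n : nat) : ncomp (set0 : {set {set 'I_n}}) = n.
Proof.
rewrite /ncomp /n_comp_mem -[RHS]card_ord; apply: eq_card => x /=.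
rewrite inE andbT; apply/eqP.
have /connectP[[|z p] /= adj_p ->] // := connect_root (hadj set0) x.
by move: adj_p => /andP[/existsP[F]]; rewrite inE.
Qed.

Definition top_color (i : nat) (j : 'I_i) : 'I_i.+2 :=
  Ordinal (ltn_ord j : (j : nat).+2 < i.+2)%N.

Lemma top_color_inj (i : nat) : injective (@top_color i).
Proof. by move=> j1 j2 /(congr1 val) /= [/val_inj]. Qed.

Definition hits_top (i : nat) (W : {set 'I_i.+2}) : bool :=
  [forall j, top_color j \in W].

Lemma card_avoiding_top (b i : nat) (C : {set 'I_i}) :
  #|[set d : {ffun 'I_b -> 'I_i.+2} |
      [forall j in C, top_color j \notin colors_used d]]| = ((i.+2 - #|C|) ^ b)%N.
Proof.
pose K := ~: (@top_color i @: C).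
have cardK : #|K| = (i.+2 - #|C|)%N.
  by rewrite cardsCs setCK card_imset ?card_ord; last exact: top_color_inj.
rewrite -cardK -[b in RHS]card_ord -card_ffun_on; apply: eq_card => d.
rewrite !inE; apply/forall_inP/ffun_onP => [d_avoid x|d_in j Cj].
  rewrite inE; apply/imsetP => -[j Cj djx].
  by move/negP: (d_avoid j Cj); apply; apply/imsetP; exists x.
apply/imsetP => -[x _ jx]; move: (d_in x); rewrite inE -jx.
by move/imsetP; apply; exists j.
Qed.

(* T(b, i) counts the maps [b] -> [i+2] using every top color: this is
   inclusion-exclusion over the set of top colors missed. *)
Lemma card_top_surjective (b i : nat) :
  (count_colorings b i.+2 (@hits_top i))%:Z = T_coef b i.
Proof.
pose A (j : 'I_i) (d : {ffun 'I_b -> 'I_i.+2}) := top_color j \notin colors_used d.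
have := @bonferroni_exact _ _ setT setT A i; rewrite cardsT card_ord => /(_ (leqnn _)).
have -> : avoid_count setT setT A = count_colorings b i.+2 (@hits_top i).
  apply: eq_card => d; rewrite !inE; apply: eq_forallb => j.
  by rewrite in_setT negbK.
have meet_avoid S : meet_count setT A S = ((i.+2 - #|S|) ^ b)%N.
  by rewrite -card_avoiding_top; apply: eq_card => d; rewrite !inE.
move <-; rewrite /bonferroni_sum /T_coef.
under eq_bigr => S _ do rewrite meet_avoid.
rewrite (sum_small_subsets_by_size _ _ (fun a => (-1) ^+ a * ((i.+2 - a) ^ b)%N%:Z)).
rewrite cardsT card_ord; apply: eq_bigr => a _.
have -> : (i.+2 - a = i - a + 2)%N by have := ltn_ord a; lia.
by rewrite -!natz natrX; ring.
Qed.

(* A map from fewer than i points cannot use all i top colors. *)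
Lemma T_coef_small (b i : nat) : (b < i)%N -> T_coef b i = 0.
Proof.
move=> b_lt_i; rewrite -card_top_surjective; apply/eqP; rewrite eqz_nat; apply/eqP.
apply: eq_card0 => d; rewrite inE; apply/negP => /forallP d_hits.
have : @top_color i @: [set: 'I_i] \subset colors_used d.
  by apply/subsetP => v /imsetP[j _ ->]; apply: d_hits.
move/subset_leq_card; rewrite card_imset ?cardsT ?card_ord; last exact: top_color_inj.
move/leq_trans/(_ (leq_imset_card _ _)); rewrite card_ord; lia.
Qed.

Definition fdiff (g : nat -> int) (i : nat) : int :=
  \sum_(0 <= c < i.+1) (-1) ^+ c * ('C(i, c))%:Z * g (i - c)%N.

Lemma fdiff0 (g : nat -> int) : fdiff g 0 = g 0%N.
Proof. by rewrite /fdiff big_nat1 mul1r. Qed.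

Lemma fdiffS (g : nat -> int) (i : nat) :
  fdiff g i.+1 = fdiff (fun y => g y.+1) i - fdiff g i.
Proof.
rewrite /fdiff big_nat_recl // [in X in _ = X - _]big_nat_recl //.
rewrite !bin0 !subn0 !mulr1 !expr0 !mul1r.
have -> : \sum_(0 <= c < i.+1) (-1) ^+ c.+1 * ('C(i.+1, c.+1))%:Z * g (i.+1 - c.+1)%N
    = \sum_(0 <= c < i.+1) (-1) ^+ c.+1 * ('C(i, c.+1))%:Z * g (i - c)%N
      - \sum_(0 <= c < i.+1) (-1) ^+ c * ('C(i, c))%:Z * g (i - c)%N.
  by rewrite -sumrB; apply: eq_bigr => c _; rewrite binS PoszD subSS exprS; ring.
rewrite big_nat_recr //= bin_small // mulr0 mul0r addr0 addrA.
by congr (_ + _ - _); apply: eq_big_nat => c /andP[_ c_lt_i]; congr (_ * g _); lia.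
Qed.

Lemma newton_forward (g : nat -> int) (x M : nat) : (x <= M)%N ->
  \sum_(0 <= i < M.+1) ('C(x, i))%:Z * fdiff g i = g x.
Proof.
elim: x g M => [|x IHx] g M x_le_M.
  rewrite big_nat_recl // bin0 mul1r fdiff0 big1_seq ?addr0 // => i _.
  by rewrite bin0n mul0r.
have := IHx (fun y => g y.+1) M (ltnW x_le_M) => /= <-.
rewrite big_nat_recl // bin0 mul1r.
rewrite (eq_bigr (fun i => ('C(x, i.+1))%:Z * fdiff g i.+1 + ('C(x, i))%:Z * fdiff g i.+1));
  last by move=> i _; rewrite binS PoszD mulrDl.
rewrite [in RHS](eq_bigr (fun i => ('C(x, i))%:Z * fdiff g i.+1 + ('C(x, i))%:Z * fdiff g i));
  last by move=> i _; rewrite fdiffS; ring.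
rewrite !big_split /= [X in _ = _ + X]big_nat_recl // bin0 mul1r.
rewrite [X in _ = X + _]big_nat_recr //= bin_small // mul0r addr0.
case: M x_le_M => [//|M] x_lt_M.
rewrite [X in _ = _ + (_ + X)]big_nat_recr //= bin_small ?mul0r ?addr0 //.
rewrite [X in _ + (X + _) = _]big_nat_recr //= bin_small ?mul0r ?addr0 //.
ring.
Qed.

(* Expansion in the binomial basis: (x+2)^b = sum_(i <= n) T(b, i) C(x, i)
   whenever b <= n (the terms i > b vanish by T_coef_small). *)
Lemma shifted_power_expansion (b n x : nat) : (b <= n)%N ->
  ((x + 2)%N%:Z) ^+ b = \sum_(i < n.+1) T_coef b i * ('C(x, i))%:Z.
Proof.
move=> b_le_n; pose g y := ((y + 2)%N%:Z) ^+ b.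
have T_fdiff i : T_coef b i = fdiff g i by rewrite /T_coef /fdiff big_mkord.
rewrite -(big_mkord xpredT (fun i => T_coef b i * ('C(x, i))%:Z)).
under eq_bigr do rewrite T_fdiff mulrC.
case: (leqP x n) => [x_le_n|n_lt_x]; first by rewrite newton_forward.
rewrite -[LHS](newton_forward g (leqnn x)) (big_cat_nat _ (n := n.+1)) //=; last exact: ltnW.
rewrite [X in _ + X]big1_seq ?addr0 // => i /andP[_]; rewrite mem_index_iota => /andP[n_lt_i _].
by rewrite -T_fdiff T_coef_small ?mulr0 //; lia.
Qed.

Lemma binomial_coords_eq0 (n : nat) (d : nat -> int) :
  (forall x, \sum_(i < n.+1) d i * ('C(x, i))%:Z = 0) ->
  forall i, (i <= n)%N -> d i = 0.
Proof.
move=> d_zero; elim/ltn_ind => i IHi i_le_n.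
have := d_zero i; rewrite (bigD1 (Ordinal (i_le_n : (i < n.+1)%N))) //= binn mulr1.
rewrite big1 ?addr0 // => j /= j_neq_i.
case: (ltngtP j i) => [j_lt_i|i_lt_j|j_eq_i].
- by rewrite IHi ?mul0r //; exact: leq_trans (ltnW j_lt_i) i_le_n.
- by rewrite bin_small ?mulr0.
- by move: j_neq_i; rewrite -val_eqE /= j_eq_i eqxx.
Qed.

Lemma sum_by_value (I : finType) (P : pred I) (h : I -> nat) (G : nat -> int) (n : nat) :
  (forall x, P x -> (h x <= n)%N) ->
  \sum_(x | P x) G (h x) = \sum_(b < n.+1) (#|[set x | P x && (h x == b)]|)%:Z * G b.
Proof.
move=> h_le_n; rewrite (partition_big (fun x => (inord (h x) : 'I_n.+1)) xpredT) //=.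
apply: eq_bigr => b _; rewrite (eq_bigr (fun _ => G b)); last first.
  by move=> x /andP[Px /eqP <-]; rewrite inordK // ltnS h_le_n.
rewrite (eq_bigl [in [set x | P x && (h x == b)]]); last first.
  move=> x; rewrite inE; case Px: (P x) => //=.
  by rewrite -val_eqE /= inordK // ltnS h_le_n.
by rewrite sumr_const -mulr_natl natz.
Qed.

Lemma ncomp_le (n : nat) (S : {set {set 'I_n}}) : (ncomp S <= n)%N.
Proof. by rewrite /ncomp /n_comp_mem -[X in (_ <= X)%N]card_ord max_card. Qed.

(* A coloring using every top color is proper on every large edge: if F were
   monochromatic, the remaining i - 1 top colors would have to be used by
   the at most n - #|F| vertices outside F. *)
Lemma top_coloring_not_mono (n i : nat) (c : {ffun 'I_n -> 'I_i.+2}) (F : {set 'I_n}) :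
  hits_top (colors_used c) -> (n - #|F| + 2 <= i)%N -> ~~ monochromatic c F.
Proof.
move=> /forallP c_hits F_large; apply/negP => /existsP[j /forall_inP cF].
have outside : (@top_color i @: setT) :\ j \subset c @: ~: F.
  apply/subsetP => v; rewrite !inE => /andP[v_neq_j /imsetP[t _ v_top]].
  have /imsetP[x _ cx] := c_hits t.
  apply/imsetP; exists x; last by rewrite v_top cx.
  by rewrite inE; apply: contra v_neq_j => Fx; rewrite v_top cx (cF x Fx).
have := subset_leq_card outside; have := leq_imset_card c (~: F).
have := cardsC F; have := cardsD1 j (@top_color i @: setT).
rewrite card_imset ?cardsT ?card_ord; last exact: top_color_inj.
move: #|_ :\ j| #|c @: ~: F| #|~: F| #|F| F_large => others img_out out szF F_large.
by case: (j \in _) => /=; lia.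
Qed.

Section HypergraphColorings.
Variables (n : nat) (E : {set {set 'I_n}}).

Definition mono_event (y : nat) (F : {set 'I_n}) (c : {ffun 'I_n -> 'I_y}) : bool :=
  monochromatic c F.

Definition top_colorings (i : nat) : {set {ffun 'I_n -> 'I_i.+2}} :=
  [set c | hits_top (colors_used c)].

(* The number of proper top colorings; it will be f_i(chi_H(k+1)). *)
Definition proper_top_count (i : nat) : nat :=
  avoid_count (top_colorings i) E (@mono_event i.+2).

(* top colorings monochromatic on the edges of S: by the component
   correspondence, there are T(ncomp S, i) of them *)
Lemma meet_count_top (i : nat) (S : {set {set 'I_n}}) :
  (meet_count (top_colorings i) (@mono_event i.+2) S)%:Z = T_coef (ncomp S) i.
Proof.
rewrite -card_top_surjective -(@card_edges_mono n i.+2 S isT (@hits_top i)); congr Posz.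
by apply: eq_card => c; rewrite !inE andbC.
Qed.

Lemma meet_count_all (k : nat) (S : {set {set 'I_n}}) :
  meet_count setT (@mono_event k.+1) S = (k.+1 ^ ncomp S)%N.
Proof.
transitivity (count_colorings (ncomp S) k.+1 predT).
  rewrite -(@card_edges_mono n k.+1 S isT predT).
  by apply: eq_card => c; rewrite !inE andbT.
rewrite /count_colorings (eq_card (B := [set: {ffun 'I_(ncomp S) -> 'I_k.+1}])).
  by rewrite cardsT card_ffun !card_ord.
by move=> d; rewrite !inE.
Qed.

Lemma partial_sum_subsets (m i : nat) : partial_sum E m i =
  \sum_(S in powerset E | (#|S| <= m)%N) (-1) ^+ #|S| * T_coef (ncomp S) i.
Proof.
rewrite sum_small_subsets /partial_sum; apply: eq_bigr => a _.
rewrite (eq_bigr (fun S => (-1) ^+ a * T_coef (ncomp S) i)); last first.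
  by move=> S /andP[_ /eqP ->].
rewrite -mulr_sumr; congr (_ * _); case: (posnP a) => [a0|a_gt0].
  rewrite a0 (big_pred1 set0); last first.
    by move=> S; rewrite /= cards_eq0 powersetE andb_idl // => /eqP ->; rewrite sub0set.
  rewrite ncomp_set0 /s_count /= big_ord_recr /= eqxx mul1r big1 ?add0r // => b _.
  by rewrite (ltn_eqF (ltn_ord b)) mul0r.
rewrite (sum_by_value (fun b => T_coef b i) (n := n)); last by move=> S _; apply: ncomp_le.
apply: eq_bigr => b _; rewrite /s_count (gtn_eqF a_gt0); congr (Posz _ * _).
by apply: eq_card => S; rewrite !inE andbA.
Qed.

Lemma partial_sum_bonferroni (m i : nat) :
  partial_sum E m i = bonferroni_sum (top_colorings i) E (@mono_event i.+2) m.
Proof. by rewrite partial_sum_subsets; apply: eq_bigr => S _; rewrite meet_count_top. Qed.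

Lemma partial_sum_full (i : nat) : partial_sum E #|E| i = (proper_top_count i)%:Z.
Proof. by rewrite partial_sum_bonferroni bonferroni_exact. Qed.

(* Inclusion-exclusion over the monochromatic edges, each term expanded in
   the binomial basis: chi_H(k+1) = sum_i partial_sum E #|E| i * C(k-1, i). *)
Lemma chi_shift_expansion (k : nat) : (1 <= k)%N ->
  (chi E k.+1)%:Z = \sum_(i < n.+1) partial_sum E #|E| i * ('C(k.-1, i))%:Z.
Proof.
move=> k_gt0.
have -> : chi E k.+1 = avoid_count setT E (@mono_event k.+1).
  by apply: eq_card => c; rewrite !inE.
have k_succ : k.+1 = (k.-1 + 2)%N by lia.
rewrite -(bonferroni_exact _ _ (leqnn #|E|)) /bonferroni_sum.
under eq_bigr => S _.
  rewrite meet_count_all [in X in (X ^ _)%N]k_succ -natz natrX natz.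
  rewrite (shifted_power_expansion _ (ncomp_le S)) mulr_sumr.
  over.
rewrite exchange_big /=; apply: eq_bigr => i _.
by rewrite partial_sum_subsets mulr_suml; apply: eq_bigr => S _; rewrite mulrA.
Qed.

End HypergraphColorings.

Theorem mainTheorem8 (n : nat) (E : {set {set 'I_n}}) :
  hypergraph_no_loops E ->
  (exists f : nat -> int, is_fvector_chi_shift E f) /\
  (forall f : nat -> int, is_fvector_chi_shift E f ->
    forall i : nat, (i <= n)%N ->
      [/\ f i = partial_sum E #|E| i,
          (forall m : nat, (m <= #|E|)%N -> ~~ odd m -> (f i <= partial_sum E m i)%R),
          (forall m : nat, (m <= #|E|)%N -> odd m -> (partial_sum E m i <= f i)%R) &
          (forall l : nat, (exists2 F, F \in E & #|F| = l) ->
             (forall F, F \in E -> (l <= #|F|)%N) ->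
             (n - l + 2 <= i)%N ->
             f i = (\sum_(j < i.+1) (-1) ^+ j * ('C(i, j))%:Z * ((i - j + 2)%N)%:Z ^+ n)%R)]).
Proof.
move=> _.
have fvector : is_fvector_chi_shift E (partial_sum E #|E|).
  by move=> k k_gt0; apply: chi_shift_expansion.
split; first by exists (partial_sum E #|E|).
move=> f f_fvector.
have f_eq i : (i <= n)%N -> f i = partial_sum E #|E| i.
  move=> i_le_n; apply/eqP; rewrite -subr_eq0; apply/eqP; move: i i_le_n.
  apply: (binomial_coords_eq0 (d := fun i => f i - partial_sum E #|E| i)) => x.
  under eq_bigr do rewrite mulrBl.
  by rewrite sumrB -(f_fvector x.+1) // -(fvector x.+1) // subrr.
move=> i i_le_n; rewrite f_eq // partial_sum_full; split => //.
- by move=> m _ m_even; rewrite partial_sum_bonferroni bonferroni_upper.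
- by move=> m _ m_odd; rewrite partial_sum_bonferroni bonferroni_lower.
- move=> l _ l_min i_large; rewrite -[RHS]/(T_coef n i) -card_top_surjective; congr Posz.
  apply: eq_card => c; rewrite !inE; apply: andb_idr => c_top.
  apply/forall_inP => F FE; apply: top_coloring_not_mono c_top _.
  by have := l_min F FE; lia.
Qed.
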